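(* Let $K$ be a commutative ring of characteristic $0$ with unit and $M$ a multiplicative $\mathbb{R}$-vector subspace of $\mathcal{H}^{>0}$. Let $F$ be an $M$-generalized power series over $K$ with generating monomials $m_0,\dots,m_k$ such that $\operatorname{lm}(F)$ is small, and let $P\in K[[T]]$. (1) $P\circ F$ is an $M$-generalized power series with generating monomials $m_0,\dots,m_k$. (2) Assume in addition that $\operatorname{supp}(F)$ is $M$-natural and the sequence $(\operatorname{lm}(F)^\nu:\nu\in\mathbb{N})$ is coinitial in $M$. Then $P\circ F$ has $M$-natural support.
   Context: $\mathcal{H}$ is the Hardy field of germs at $+\infty$ of unary functions definable in $\mathbb{R}_{\mathrm{an},\exp}$, totally ordered by eventual comparison; a germ is small if it tends to $0$. A generalized power series over $K$ in $X=(X_0,\dots,X_k)$ is $\sum_{\alpha\in[0,\infty)^{k+1}}a_\alpha X^\alpha$ with support in a product of well-ordered subsets of $\mathbb{R}$; these form a ring $K[[X^*]]$; the support is natural if for each $a>0$ and each $i$, $[0,a)\cap\Pi_i(\operatorname{supp}G)$ is finite. An $M$-generalized power series with generating monomials $m_0,\dots,m_k$ (small elements of $M$) is a series $G(m)=\sum_{n\in M}\big(\sum_{\alpha\in\operatorname{supp}G,\,m^\alpha=n}a_\alpha\big)n$ in the ring $K((M))$ of formal series with anti-well-ordered support, for some $G\in K[[X^*]]$ with natural support; $\operatorname{lm}$ denotes the largest support element. Composition: if $P=\sum_\nu a_\nu T^\nu$ and $F=G(m)$ with $G$ of natural support, then since $\operatorname{lm}(F)$ is small, $G$ has positive order, the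 sum $P\circ G:=\sum_\nu a_\nu G^\nu$ is a well-defined element of $K[[X^*]]$, and $P\circ F:=(P\circ G)(m)$; this does not depend on the choice of $G$. A subset $S\subseteq M$ is $M$-natural if $S\cap(a,+\infty)$ is finite for all $a\in M$; coinitial in $M$ means that for every $m\in M$ some term of the sequence is $\le m$. *)

From HB Require Import structures.
From mathcomp Require Import all_boot all_order all_algebra.
From mathcomp Require Import Rstruct.
From Stdlib Require Import ClassicalEpsilon.
Set Implicit Arguments. Unset Strict Implicit. Unset Printing Implicit Defensive.
Import Order.TTheory GRing.Theory Num.Theory.
Local Open Scope ring_scope.

Notation Real := Rdefinitions.R.

(* M : a totally ordered multiplicative R-vector space (an abstraction of a *)
(* multiplicative R-vector subspace of H^{>0}).     *)
(* mmul = product of germs, mone = the germ 1, mpowr m r = m^r,             *)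
(* mle = eventual comparison.                                               *)
Record ordMulRVS := OrdMulRVS {
  mcar :> Type;
  mmul : mcar -> mcar -> mcar;
  mone : mcar;
  mpowr : mcar -> Real -> mcar;
  mle : mcar -> mcar -> Prop;
  mmulA : forall x y z, mmul x (mmul y z) = mmul (mmul x y) z;
  mmulC : forall x y, mmul x y = mmul y x;
  mmul1 : forall x, mmul mone x = x;
  mpowr1 : forall x, mpowr x 1 = x;
  mpowr0 : forall x, mpowr x 0 = mone;
  mpowrD : forall x (a b : Real), mpowr x (a + b) = mmul (mpowr x a) (mpowr x b);
  mpowrM : forall x y (a : Real), mpowr (mmul x y) a = mmul (mpowr x a) (mpowr y a);
  mpowrA : forall x (a b : Real), mpowr (mpowr x a) b = mpowr x (a * b);
  mle_refl : forall x, mle x x;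
  mle_anti : forall x y, mle x y -> mle y x -> x = y;
  mle_trans : forall x y z, mle x y -> mle y z -> mle x z;
  mle_total : forall x y, mle x y \/ mle y x;
  mle_mul : forall x y z, mle x y -> mle (mmul x z) (mmul y z);
  mle_powr : forall x (a : Real), mle mone x -> 0 <= a -> mle mone (mpowr x a)
}.

Definition mlt (M : ordMulRVS) (x y : M) : Prop := mle x y /\ x <> y.

(* a germ is small iff it tends to 0, i.e. (for positive germs of a Hardy
   field) iff it is < 1 *)
Definition msmall (M : ordMulRVS) (x : M) : Prop := mlt x (mone M).

Definition finiteP (T : Type) (A : T -> Prop) : Prop :=
  exists s : list T, forall x, A x -> List.In x s.

(* sum of f over the set A when A is finite (0 otherwise: never used in a
   situation where A is infinite) *)
Definition fsum (T : eqType) (V : nmodType) (A : T -> Prop) (f : T -> V) : V :=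
  match excluded_middle_informative
          (exists s : seq T, uniq s /\ forall x, x \in s <-> A x) with
  | left H => \sum_(x <- proj1_sig (constructive_indefinite_description _ H)) f x
  | right _ => 0
  end.

Definition exps (k : nat) := {ffun 'I_k.+1 -> Real}.

Definition gser (K : comNzRingType) (k : nat) := exps k -> K.

Definition well_ordered (S : Real -> Prop) : Prop :=
  forall A : Real -> Prop, (forall x, A x -> S x) -> (exists x, A x) ->
    exists x, A x /\ forall y, A y -> x <= y.

Definition is_gps (K : comNzRingType) (k : nat) (G : gser K k) : Prop :=
  (forall a, G a != 0 -> forall i, 0 <= a i) /\
  exists W : 'I_k.+1 -> Real -> Prop,
    (forall i, well_ordered (W i)) /\ forall a, G a != 0 -> forall i, W i (a i).

Definition natural_support (K : comNzRingType) (k : nat) (G : gser K k) : Prop :=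
  forall (r : Real) (i : 'I_k.+1), 0 < r ->
    finiteP (fun x : Real => 0 <= x < r /\ exists a, G a != 0 /\ a i = x).

Definition gone (K : comNzRingType) (k : nat) : gser K k :=
  fun a => if a == [ffun=> 0] then 1 else 0.

Definition gmul (K : comNzRingType) (k : nat) (G H : gser K k) : gser K k :=
  fun a => fsum (fun bc : exps k * exps k =>
                   [/\ G bc.1 != 0, H bc.2 != 0 & [ffun i => bc.1 i + bc.2 i] = a])
                (fun bc => G bc.1 * H bc.2).

Fixpoint gpow (K : comNzRingType) (k : nat) (G : gser K k) (n : nat) : gser K k :=
  match n with O => @gone K k | n'.+1 => gmul G (gpow G n') end.

(* P o G = sum_nu a_nu G^nu, for P = sum_nu a_nu T^nu in K[[T]] *)
Definition gcomp (K : comNzRingType) (k : nat) (P : nat -> K) (G : gser K k) : gser K k :=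
  fun a => fsum (fun nu : nat => P nu * gpow G nu a != 0) (fun nu => P nu * gpow G nu a).

Definition mono (M : ordMulRVS) (k : nat) (m : 'I_k.+1 -> M) (a : exps k) : M :=
  \big[@mmul M / mone M]_(i < k.+1) mpowr (m i) (a i).

Definition geval (K : comNzRingType) (M : ordMulRVS) (k : nat)
    (m : 'I_k.+1 -> M) (G : gser K k) : M -> K :=
  fun n => fsum (fun a => G a != 0 /\ mono m a = n) G.

Definition in_hahn (K : comNzRingType) (M : ordMulRVS) (F : M -> K) : Prop :=
  forall A : M -> Prop, (forall x, A x -> F x != 0) -> (exists x, A x) ->
    exists x, A x /\ forall y, A y -> mle y x.

Definition is_Mgps (K : comNzRingType) (M : ordMulRVS) (k : nat)
    (m : 'I_k.+1 -> M) (F : M -> K) : Prop :=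
  (forall i, msmall (m i)) /\ in_hahn F /\
  exists G : gser K k, is_gps G /\ natural_support G /\ F = geval m G.

Definition is_lm (K : comNzRingType) (M : ordMulRVS) (F : M -> K) (l : M) : Prop :=
  F l != 0 /\ forall n, F n != 0 -> mle n l.

Definition lm_small (K : comNzRingType) (M : ordMulRVS) (F : M -> K) : Prop :=
  exists l, is_lm F l /\ msmall l.

Definition Mcomp (K : comNzRingType) (M : ordMulRVS) (k : nat)
    (m : 'I_k.+1 -> M) (P : nat -> K) (F : M -> K) : M -> K :=
  match excluded_middle_informative
          (exists G : gser K k, is_gps G /\ natural_support G /\ F = geval m G) with
  | left H => geval m (gcomp P (proj1_sig (constructive_indefinite_description _ H)))
  | right _ => fun _ => 0
  end.

Definition M_natural (K : comNzRingType) (M : ordMulRVS) (F : M -> K) : Prop :=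
  forall a : M, finiteP (fun n => F n != 0 /\ mlt a n).

Definition coinitial (M : ordMulRVS) (u : nat -> M) : Prop :=
  forall x : M, exists nu, mle (u nu) x.

(* Write F = G(m) with G of natural support.  The coordinates of the exponents
   in supp G generate, coordinatewise, additive monoids of nonnegative reals
   which are again natural; their product is a cone of exponents containing the
   supports of all powers G^nu and of P o G.  Natural sets are well ordered, so
   by Dickson's lemma every sequence in the cone has a componentwise increasing
   pair.  As alpha |-> m^alpha is antitone, and injective on comparable pairs,
   every fibre {alpha : m^alpha = n} of the cone is finite and the evaluation at
   m of a series supported in the cone has anti-well-ordered support: this is (1).
   For (2), lm(F) being small forces G to have no constant term, so the total
   degree on supp G^nu grows linearly with nu and, on each finite fibre, P o G is
   a finite sum of the a_nu G^nu.  Since supp (A B)(m) is contained in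
   supp A(m) . supp B(m), every monomial of P o F is a product of nu monomials
   of F, hence at most lm(F)^nu.  Coinitiality bounds nu for the monomials above
   a given element of M, and the M-naturality of supp F leaves finitely many of
   them. *)

From HB Require Import structures.
From mathcomp Require Import all_boot all_order all_algebra.
From mathcomp Require Import Rstruct boolp.
From Stdlib Require Import ClassicalEpsilon.
Set Implicit Arguments. Unset Strict Implicit. Unset Printing Implicit Defensive.
Import Order.TTheory GRing.Theory Num.Theory.
Local Open Scope ring_scope.

Lemma List_InE (T : eqType) (x : T) (s : seq T) : List.In x s <-> x \in s.
Proof.
elim: s => [|y s IH] //=; rewrite in_cons; split.
- by case=> [->|/IH ->]; rewrite ?eqxx ?orbT.
- by case/orP => [/eqP ->|/IH]; [left|right].
Qed.

Lemma finiteP_sub (T : Type) (A B : T -> Prop) :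
  (forall x, A x -> B x) -> finiteP B -> finiteP A.
Proof. by move=> AB [s hs]; exists s => x /AB /hs. Qed.

Lemma finiteP_bigcup (I T : Type) (s : seq I) (B : I -> T -> Prop) :
  (forall i, finiteP (B i)) -> finiteP (fun x => exists2 i, List.In i s & B i x).
Proof.
move=> finB.
have /choice [L hL] : forall i, exists L : seq T, forall x, B i x -> List.In x L := finB.
exists (List.flat_map L s) => x [i si Bix].
by apply/List.in_flat_map; exists i; split => //; apply: hL.
Qed.

Lemma finiteP_uniq (T : eqType) (A : T -> Prop) : finiteP A ->
  exists s : seq T, uniq s /\ forall x, x \in s <-> A x.
Proof.
case=> s hs; exists (undup [seq x <- s | `[< A x >]]); split; first exact: undup_uniq.
move=> x; rewrite mem_undup mem_filter; split; first by case/andP => /asboolP.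
by move=> Ax; rewrite (asboolT Ax); apply/List_InE/hs.
Qed.

Lemma sum_neq0 (I : Type) (V : nmodType) (r : seq I) (P : pred I) (F : I -> V) :
  \sum_(i <- r | P i) F i != 0 -> exists i, [/\ List.In i r, P i & F i != 0].
Proof.
elim: r => [|i r IH]; first by rewrite big_nil eqxx.
rewrite big_cons; case: ifP => Pi; last by case/IH => j [? ? ?]; exists j; split; first right.
have [->|Fi] := eqVneq (F i) 0; last by exists i; split; first left.
by rewrite add0r => /IH [j [? ? ?]]; exists j; split; first right.
Qed.

Lemma fsum_neq0 (T : eqType) (V : nmodType) (A : T -> Prop) (f : T -> V) :
  fsum A f != 0 -> exists x, A x /\ f x != 0.
Proof.
rewrite /fsum; case: excluded_middle_informative => [H|]; last by rewrite eqxx.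
case: (constructive_indefinite_description _ H) => s [_ hs] /=.
by case/sum_neq0 => x [/List_InE /hs Ax _ fx]; exists x.
Qed.

Lemma fsum_big_seq (T : eqType) (V : nmodType) (A : T -> Prop) (f g : T -> V)
    (s : seq T) :
  uniq s -> (forall x, A x -> x \in s) ->
  {in s, forall x, A x -> g x = f x} -> {in s, forall x, ~ A x -> g x = 0} ->
  fsum A f = \sum_(x <- s) g x.
Proof.
move=> us As gf g0; rewrite /fsum; case: excluded_middle_informative => [H|[]]; last first.
  by apply: finiteP_uniq; exists s => x /As /List_InE.
case: (constructive_indefinite_description _ H) => s0 [us0 hs0] /=.
rewrite [RHS](bigID (fun x => `[< A x >])) /= [X in _ = _ + X]big1_seq ?addr0; last first.
  by move=> x /andP [/asboolPn nA xs]; apply: g0.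
rewrite (perm_big [seq x <- s | `[< A x >]]) ?big_filter; last first.
  apply: uniq_perm => //; first exact: filter_uniq.
  move=> x; rewrite mem_filter; apply/idP/andP => [/hs0 Ax|[/asboolP /hs0] //].
  by rewrite asboolT // As.
rewrite big_seq_cond [RHS]big_seq_cond; apply: eq_bigr => x /andP [xs /asboolP Ax].
exact/esym/gf.
Qed.

Lemma sum_pred1_uniq (I : eqType) (V : nmodType) (r : seq I) (x : I) (v : V) :
  uniq r -> \sum_(i <- r | x == i) v = if x \in r then v else 0.
Proof.
elim: r => [|i r IH] /=; first by rewrite big_nil.
rewrite big_cons in_cons => /andP [ir /IH ->].
by case: eqVneq => [->|] //=; rewrite (negbTE ir) addr0.
Qed.

Lemma sum_fibres (I U : eqType) (V : nmodType) (r : seq I) (s : seq U) (P : pred U)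
    (g : I -> U) (F : I -> V) :
  uniq s -> {in r, forall i, P (g i) -> g i \in s} ->
  \sum_(u <- s | P u) \sum_(i <- r | g i == u) F i = \sum_(i <- r | P (g i)) F i.
Proof.
move=> us gs; under eq_bigr do rewrite big_mkcond; rewrite exchange_big [RHS]big_mkcond.
apply: eq_big_seq => i ir /=; rewrite -big_mkcondr.
case: ifPn => Pgi; last first.
  by rewrite big_pred0 // => u; have [<-|] := eqVneq (g i) u; rewrite ?andbF ?(negbTE Pgi).
rewrite (eq_bigl (fun u => g i == u)) ?sum_pred1_uniq ?gs // => u.
by have [<-|] := eqVneq (g i) u; rewrite ?andbF ?Pgi.
Qed.

Lemma sum_mul_fibres_eq0 (I U : eqType) (R : pzRingType) (r : seq I) (g : I -> U)
    (f : I -> R) (h : U -> R) :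
  {in r, forall x, h (g x) != 0 -> \sum_(y <- r | g y == g x) f y = 0} ->
  \sum_(x <- r) f x * h (g x) = 0.
Proof.
move=> hf; rewrite -(@sum_fibres _ _ _ _ (undup (map g r)) predT g) ?undup_uniq //; last first.
  by move=> x xr _; rewrite mem_undup map_f.
apply: big1_seq => u /andP [_]; rewrite mem_undup => /mapP [x xr ->].
rewrite (eq_bigr (fun y => f y * h (g x))) -?mulr_suml; last by move=> y /eqP ->.
by have [->|/(hf x xr) ->] := eqVneq (h (g x)) 0; rewrite ?mulr0 ?mul0r.
Qed.

HB.instance Definition _ (M : ordMulRVS) := gen_eqMixin (mcar M).
HB.instance Definition _ (M : ordMulRVS) :=
  Monoid.isComLaw.Build (mcar M) (mone M) (@mmul M) (@mmulA M) (@mmulC M) (@mmul1 M).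

Section OrderedGroup.
Variable M : ordMulRVS.
Implicit Types x y z : M.

Lemma mmul1r x : mmul x (mone M) = x.
Proof. by rewrite mmulC mmul1. Qed.

Lemma mmulV x : mmul x (mpowr x (-1)) = mone M.
Proof. by rewrite -{1}(mpowr1 x) -mpowrD addrN mpowr0. Qed.

Lemma mmul_cancel z x y : mmul z x = mmul z y -> x = y.
Proof.
move=> /(congr1 (mmul (mpowr z (-1)))).
by rewrite !mmulA (mmulC (mpowr z _) z) mmulV !mmul1.
Qed.

Lemma mle_mull z x y : mle x y -> mle (mmul z x) (mmul z y).
Proof. by rewrite ![mmul z _]mmulC; apply: mle_mul. Qed.

Lemma mle_mul2 x y z t : mle x y -> mle z t -> mle (mmul x z) (mmul y t).
Proof. by move=> /(mle_mul z) + /(mle_mull y); apply: mle_trans. Qed.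

Lemma mlt_le_trans x y z : mlt x y -> mle y z -> mlt x z.
Proof.
case=> xy nxy yz; split; first exact: mle_trans xy yz.
by move=> xz; subst z; apply/nxy/mle_anti.
Qed.

Lemma mle1_mulr x y : mle y (mone M) -> mle (mmul x y) x.
Proof. by move=> /(mle_mull x); rewrite mmul1r. Qed.

Lemma mpowr_one (r : Real) : mpowr (mone M) r = mone M.
Proof. by rewrite -(mpowr0 (mone M)) mpowrA mul0r. Qed.

Lemma mpowr_le1 x (r : Real) : mle x (mone M) -> 0 <= r -> mle (mpowr x r) (mone M).
Proof.
move=> x1 r0; have /mle_powr/(_ r0) : mle (mone M) (mpowr x (-1)).
  by have := mle_mul (mpowr x (-1)) x1; rewrite mmulV mmul1.
by move=> /(mle_mull (mpowr x r)); rewrite mmul1r -mpowrM mmulV mpowr_one.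
Qed.

Lemma mpowr_eq1 x (r : Real) : r != 0 -> mpowr x r = mone M -> x = mone M.
Proof. by move=> r0 xr1; rewrite -(mpowr1 x) -(divff r0) -mpowrA xr1 mpowr_one. Qed.

Lemma mle_prod1 (I : Type) (r : seq I) (P : pred I) (F : I -> M) :
  (forall i, P i -> mle (F i) (mone M)) ->
  mle (\big[@mmul M/mone M]_(i <- r | P i) F i) (mone M).
Proof.
move=> F1; apply: (big_ind (fun u => mle u (mone M))) => //; first exact: mle_refl.
by move=> u v u1 v1; rewrite -(mmul1 (mone M)); apply: mle_mul2.
Qed.

End OrderedGroup.

Section Monomials.
Variables (M : ordMulRVS) (k : nat) (m : 'I_k.+1 -> M).
Implicit Types a b : exps k.

Lemma mono0 : mono m 0 = mone M.
Proof. by rewrite /mono big1 // => i _; rewrite ffunE mpowr0. Qed.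

Lemma monoD a b : mono m (a + b) = mmul (mono m a) (mono m b).
Proof. by rewrite /mono -big_split; apply: eq_bigr => i _; rewrite ffunE mpowrD. Qed.

Hypothesis m_small : forall i, msmall (m i).

Lemma mono_le1 a : (forall i, 0 <= a i) -> mle (mono m a) (mone M).
Proof. by move=> a0; apply: mle_prod1 => i _; apply: mpowr_le1 => //; case: (m_small i). Qed.

Lemma mono_eq1 a : (forall i, 0 <= a i) -> mono m a = mone M -> a = 0.
Proof.
move=> a0 a1; apply/ffunP => j; rewrite ffunE; apply: contra_eqP a1 => /eqP aj.
have mj1 : mle (mpowr (m j) (a j)) (mone M) by apply: mpowr_le1 => //; case: (m_small j).
apply/eqP; rewrite /mono (bigD1 j) //= => a1.
case: (m_small j) => _; apply; apply: (mpowr_eq1 aj).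
apply: mle_anti mj1 _; rewrite -[X in mle X _]a1; apply: mle1_mulr.
by apply: mle_prod1 => i _; apply: mpowr_le1 => //; case: (m_small i).
Qed.

Lemma mono_anti a b : (forall i, a i <= b i) -> mle (mono m b) (mono m a).
Proof.
move=> ab; rewrite -(subrK a b) addrC monoD; apply: mle1_mulr.
by apply: mono_le1 => i; rewrite !ffunE subr_ge0.
Qed.

Lemma mono_inj_le a b : (forall i, a i <= b i) -> mono m a = mono m b -> a = b.
Proof.
move=> ab; rewrite -(subrK a b) addrC monoD -{1}(mmul1r (mono m a)).
move=> /mmul_cancel/esym/mono_eq1 -> //; first by rewrite addr0.
by move=> i; rewrite !ffunE subr_ge0.
Qed.

End Monomials.

Definition natural (S : Real -> Prop) : Prop :=
  forall r : Real, finiteP (fun x => S x /\ x < r).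

Lemma natural_well_ordered (S : Real -> Prop) : natural S -> well_ordered S.
Proof.
move=> natS A AS [x0 Ax0]; have [L hL] := natS (x0 + 1).
have inL x : A x -> x < x0 + 1 -> x \in L.
  by move=> Ax x1; apply/List_InE/hL; split; first exact: AS.
exists (\big[Num.min/x0]_(z <- L | `[< A z >]) z); split.
  apply: (big_ind A) => // [u v Au Av|z /asboolP //].
  by rewrite /Num.min; case: ifP.
move=> t At; have [tx|xt] := ltP t (x0 + 1).
  by apply: ge_bigmin_seq; [apply: inL | apply/asboolP].
apply: le_trans (bigmin_le_id _ _ _ _) _; apply: le_trans _ xt.
by rewrite lerDl ler01.
Qed.

Lemma natural_pos_lbound (S : Real -> Prop) : natural S ->
  exists2 d : Real, 0 < d & forall x, S x -> 0 < x -> d <= x.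
Proof.
move=> /(_ 1) [L hL]; exists (\big[Num.min/1]_(x <- L | 0 < x) x).
  by apply: lt_bigmin => //; apply: ltr01.
move=> x Sx x0; have [x1|] := ltP x 1; last exact: le_trans (bigmin_le_id _ _ _ _).
by apply: ge_bigmin_seq => //; apply/List_InE/hL.
Qed.

Definition add_closure (S : Real -> Prop) (x : Real) : Prop :=
  exists2 l : seq Real, (forall y, y \in l -> S y) & x = \sum_(y <- l) y.

Fixpoint sums_upto (L : seq Real) (n : nat) : seq Real :=
  if n is n'.+1 then sums_upto L n' ++ [seq y + z | y <- L, z <- sums_upto L n']
  else [:: 0].

Lemma sum_in_sums_upto (L l : seq Real) (n : nat) :
  {subset l <= L} -> (size l <= n)%N -> \sum_(y <- l) y \in sums_upto L n.
Proof.
elim: l n => [|y l IH] n lL.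
  by rewrite big_nil; elim: n => [|n IHn] _ /=; rewrite ?mem_cat ?IHn ?mem_seq1.
case: n => [//|n] ln /=; rewrite big_cons mem_cat; apply/orP; right.
apply: allpairs_f; first by apply: lL; rewrite mem_head.
by apply: IH => // z zl; apply: lL; rewrite in_cons zl orbT.
Qed.

Section AddClosure.
Variable S : Real -> Prop.

Lemma add_closure_sub x : S x -> add_closure S x.
Proof. by exists [:: x]; rewrite ?big_seq1 // => y; rewrite inE => /eqP ->. Qed.

Lemma add_closure0 : add_closure S 0.
Proof. by exists [::]; rewrite ?big_nil. Qed.

Lemma add_closureD x y : add_closure S x -> add_closure S y -> add_closure S (x + y).
Proof.
case=> [l1 S1 ->] [l2 S2 ->]; exists (l1 ++ l2); last by rewrite big_cat.
by move=> z; rewrite mem_cat => /orP [/S1|/S2].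
Qed.

Hypothesis S_ge0 : forall x, S x -> 0 <= x.

Lemma add_closure_ge0 x : add_closure S x -> 0 <= x.
Proof. by case=> l lS ->; rewrite big_seq sumr_ge0 // => y /lS /S_ge0. Qed.

(* Positive generators are at least [d], so a sum below [r] has fewer than
   [r / d] nonzero terms, each taken from the finite set [S] below [r]. *)
Lemma add_closure_natural : natural S -> natural (add_closure S).
Proof.
move=> natS r; have [d d0 dS] := natural_pos_lbound natS; have [L hL] := natS r.
exists (sums_upto L (Num.Def.archi_bound (r / d))) => _ [[l lS ->] lr]; apply/List_InE.
set l' := [seq y <- l | 0 < y]; have l'S y : y \in l' -> S y /\ 0 < y.
  by rewrite mem_filter => /andP [y0 /lS].
have e : \sum_(y <- l) y = \sum_(y <- l') y.
  rewrite big_filter [LHS](bigID (fun y => 0 < y)) /= [X in _ + X]big1_seq ?addr0 //.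
  move=> y /andP [y0 yl]; apply/eqP; rewrite eq_le (S_ge0 (lS y yl)) andbT.
  by rewrite leNgt.
rewrite e in lr *; apply: sum_in_sums_upto.
  move=> y yl'; apply/List_InE/hL; split; first by case: (l'S y yl').
  apply: le_lt_trans lr; rewrite (big_rem _ yl') lerDl big_seq sumr_ge0 // => z.
  by move=> /mem_rem /l'S [_ /ltW].
have size_d : (size l')%:R * d <= \sum_(y <- l') y.
  rewrite mulr_natl -iter_addr_0 -count_predT -big_const_seq big_seq [X in _ <= X]big_seq.
  by apply: ler_sum => y /l'S [/dS].
have rd0 : 0 <= r / d.
  apply: divr_ge0 (ltW d0); apply: le_trans (ltW lr); apply: le_trans size_d.
  by rewrite mulr_ge0 // ltW.
apply/ltnW; rewrite -(ltr_nat Real); apply: le_lt_trans (Num.Theory.archi_boundP rd0).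
by rewrite ler_pdivlMr //; apply: ltW (le_lt_trans size_d lr).
Qed.

End AddClosure.

Lemma well_ordered_nondecr_subseq (W : Real -> Prop) (x : nat -> Real) :
  well_ordered W -> (forall j, W (x j)) ->
  exists phi : nat -> nat,
    (forall j, phi j < phi j.+1)%N /\ forall j, x (phi j) <= x (phi j.+1).
Proof.
move=> woW Wx.
have /choice [tm tm_min] : forall N, exists j,
    (N <= j)%N /\ forall l, (N <= l)%N -> x j <= x l.
  move=> N; have [] := woW (fun y => exists2 l, (N <= l)%N & x l = y).
  - by move=> _ [l _ <-].
  - by exists (x N), N.
  by move=> _ [[j Nj <-] jmin]; exists j; split => // l Nl; apply: jmin; exists l.
pose fix phi j := if j is j'.+1 then tm (phi j').+1 else tm 0%N.
have phi_incr j : (phi j < phi j.+1)%N by case: (tm_min (phi j).+1).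
exists phi; split => // -[|j] /=; first by apply: (tm_min 0%N).2.
by apply: (tm_min _).2; apply: leq_trans (phi_incr j) (ltnW (phi_incr j.+1)).
Qed.

Lemma dickson (k : nat) (W : 'I_k.+1 -> Real -> Prop) (s : nat -> exps k) :
  (forall i, well_ordered (W i)) -> (forall j i, W i (s j i)) ->
  exists j l, (j < l)%N /\ forall i, s j i <= s l i.
Proof.
move=> woW sW.
suff [phi [phi_incr phi_mono]] : exists phi : nat -> nat, (forall j, phi j < phi j.+1)%N /\
    forall i, i \in enum 'I_k.+1 -> forall j, s (phi j) i <= s (phi j.+1) i.
  by exists (phi 0%N), (phi 1%N); split => // i; apply: phi_mono; rewrite mem_enum.
elim: (enum _) => [|i cs [phi [phi_incr phi_mono]]]; first by exists id.
have [psi [psi_incr psi_mono]] :=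
  well_ordered_nondecr_subseq (woW i) (fun j => sW (phi j) i).
exists (phi \o psi); split => [j|i']; first exact: homo_ltn ltn_trans phi_incr _ _ (psi_incr j).
rewrite in_cons => /predU1P [-> //|/phi_mono mono_i'] j /=.
have := homo_leq (f := fun j => s (phi j) i') (r := fun a b : Real => a <= b).
by apply=> //; [exact: le_trans | exact: ltnW (psi_incr j)].
Qed.

Lemma not_finiteP_seq (T : Type) (A : T -> Prop) : ~ finiteP A ->
  exists s : nat -> T, (forall j, A (s j)) /\ forall j l, (j < l)%N -> s j <> s l.
Proof.
move=> infA; have /choice [new newP] : forall L : seq T, exists x, A x /\ ~ List.In x L.
  move=> L; apply: contrapT => noL; apply: infA; exists L => x Ax.
  by apply: contrapT => xL; apply: noL; exists x.
pose fix prev j := if j is j'.+1 then new (prev j') :: prev j' else [::].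
exists (fun j => new (prev j)); split => [j|j l jl ejl]; first by case: (newP (prev j)).
have : List.In (new (prev j)) (prev l).
  elim: l jl {ejl} => [//|l IH]; rewrite ltnS leq_eqVlt => /predU1P [->|/IH]; by [left|right].
by rewrite ejl; case: (newP (prev l)).
Qed.

Lemma finiteP_exps (k : nat) (A : 'I_k.+1 -> Real -> Prop) :
  (forall i, finiteP (A i)) -> finiteP (fun a : exps k => forall i, A i (a i)).
Proof.
move=> /fin_all_exists [L hL]; pose N := (\sum_i size (L i)).+1.
exists [seq [ffun i => nth 0 (L i) (f i)] | f : {ffun 'I_k.+1 -> 'I_N}] => a Aa.
apply/List_InE/mapP; exists [ffun i => inord (index (a i) (L i))]; first by rewrite mem_enum.
have aL i : a i \in L i by apply/List_InE/hL.
apply/ffunP => i; rewrite !ffunE inordK ?nth_index //.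
by rewrite ltnS (leq_trans (index_size _ _)) // (bigD1 i) //= leq_addr.
Qed.

Section SeriesOnFiniteSupport.
Variables (K : comNzRingType) (k : nat).
Implicit Types (A B G H : gser K k) (a : exps k).

Lemma gmul_big_seq A B a (s : seq (exps k)) : uniq s ->
  (forall b c, A b != 0 -> B c != 0 -> b + c = a -> b \in s /\ c \in s) ->
  gmul A B a = \sum_(b <- s) \sum_(c <- s | b + c == a) A b * B c.
Proof.
move=> us sAB; rewrite /gmul (@fsum_big_seq _ _ _ _
  (fun p => if p.1 + p.2 == a then A p.1 * B p.2 else 0) [seq (b, c) | b <- s, c <- s]).
- by rewrite big_allpairs; apply: eq_bigr => b _; rewrite [RHS]big_mkcond.
- by apply: allpairs_uniq => // -[? ?] [? ?] _ _ [-> ->].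
- by move=> [b c] [/= Ab Bc /(sAB _ _ Ab Bc) [bs cs]]; apply: allpairs_f.
- by move=> [b c] _ [/= _ _ bca]; have -> : b + c = a := bca; rewrite eqxx.
move=> [b c] _ /= nAB; case: eqP => // bca; apply/eqP; apply: contrapT => ABbc.
by apply: nAB; split => //; apply/eqP => Z; apply: ABbc; rewrite Z ?mulr0 ?mul0r.
Qed.

Lemma gcomp_big_ord (P : nat -> K) G a (N : nat) :
  (forall nu, (N <= nu)%N -> gpow G nu a = 0) ->
  gcomp P G a = \sum_(nu < N) P nu * gpow G nu a.
Proof.
move=> Gbig; rewrite -(big_mkord xpredT (fun nu => P nu * gpow G nu a)) /index_iota subn0.
apply: fsum_big_seq => [||nu _ //|nu _ /negP]; first exact: iota_uniq.
  move=> nu; rewrite mem_iota leq0n add0n ltnNge /=; apply: contraNN => /Gbig ->.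
  by rewrite mulr0.
by rewrite negbK => /eqP.
Qed.

Variables (M : ordMulRVS) (m : 'I_k.+1 -> M).

Lemma geval_big_seq H (n : M) (s : seq (exps k)) : uniq s ->
  (forall a, H a != 0 -> mono m a = n -> a \in s) ->
  geval m H n = \sum_(a <- s | mono m a == n) H a.
Proof.
move=> us sH; rewrite big_mkcond; apply: fsum_big_seq => // [a [Ha an]|a _ [_ ->]|a _ nHa].
- exact: sH.
- by rewrite eqxx.
case: eqP => // an; apply/eqP; apply: contrapT => /negP Ha; exact: nHa.
Qed.

End SeriesOnFiniteSupport.

Lemma in_hahn_of_descents (K : comNzRingType) (M : ordMulRVS) (F : M -> K) :
  (forall ys : nat -> M, (forall j, F (ys j) != 0) ->
     exists j l, (j < l)%N /\ mle (ys l) (ys j)) ->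
  in_hahn F.
Proof.
move=> descent A AF [y0 Ay0]; apply: contrapT => nomax.
have /choice [next nextP] : forall x, exists y, A x -> A y /\ ~ mle y x.
  move=> x; have [Ax|] := pselect (A x); last by exists x.
  apply: contrapT => /forallNP top; apply: nomax; exists x; split => // y Ay.
  by apply: contrapT => yx; apply: (top y).
pose ys j := iter j next y0.
have Ays j : A (ys j) by elim: j => //= j IH; case: (nextP _ IH).
have ys_up j : mle (ys j) (ys j.+1).
  by case: (mle_total (ys j) (ys j.+1)) => // ?; case: (nextP _ (Ays j)).
have [j [l [jl lj]]] := descent ys (fun j => AF _ (Ays j)).
case: (nextP _ (Ays j)) => _; apply; apply: mle_trans _ lj.
have ys_mono := homo_leq (f := ys) (r := @mle M) (@mle_refl M)
  (fun _ _ _ => @mle_trans M _ _ _) ys_up.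
exact: ys_mono jl.
Qed.

Record exp_cone (k : nat) := ExpCone {
  cone_set :> 'I_k.+1 -> Real -> Prop;
  cone_ge0 : forall i x, cone_set i x -> 0 <= x;
  cone_natural : forall i, natural (cone_set i);
  cone0 : forall i, cone_set i 0;
  coneD : forall i x y, cone_set i x -> cone_set i y -> cone_set i (x + y)
}.

Definition in_cone (k : nat) (C : exp_cone k) (a : exps k) : Prop := forall i, C i (a i).

Fixpoint supp_prod (K : comNzRingType) (M : ordMulRVS) (F : M -> K) (nu : nat) (n : M)
    : Prop :=
  if nu is nu'.+1 then
    exists n1 n2, [/\ F n1 != 0, supp_prod F nu' n2 & n = mmul n1 n2]
  else n = mone M.

Section Cone.
Variables (k : nat) (C : exp_cone k).
Implicit Types a b c : exps k.

Lemma in_cone0 : in_cone C 0.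
Proof. by move=> i; rewrite ffunE; apply: cone0. Qed.

Lemma in_coneD a b : in_cone C a -> in_cone C b -> in_cone C (a + b).
Proof. by move=> aC bC i; rewrite ffunE; apply: coneD. Qed.

Lemma in_cone_ge0 a : in_cone C a -> forall i, 0 <= a i.
Proof. by move=> aC i; apply: cone_ge0 (aC i). Qed.

Lemma cone_dickson (s : nat -> exps k) : (forall j, in_cone C (s j)) ->
  exists j l, (j < l)%N /\ forall i, s j i <= s l i.
Proof. by apply: dickson => i; apply/natural_well_ordered/cone_natural. Qed.

Lemma cone_below_finite a : finiteP (fun x => in_cone C x /\ forall i, x i <= a i).
Proof.
apply: finiteP_sub (finiteP_exps (A := fun i x => C i x /\ x < a i + 1) _).
  by move=> x [xC xa] i; split => //; apply: le_lt_trans (xa i) _; rewrite ltrDl.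
by move=> i; apply: cone_natural.
Qed.

Lemma cone_pos_lbound : exists2 d : Real, 0 < d & forall i x, C i x -> 0 < x -> d <= x.
Proof.
have [d d0 dC] : exists2 d : Real, 0 < d & forall x, (exists i, C i x) -> 0 < x -> d <= x.
  apply: natural_pos_lbound => r.
  apply: finiteP_sub (finiteP_bigcup (enum 'I_k.+1) (fun i => cone_natural C i r)).
  by move=> x [[i Cix] xr]; exists i => //; apply/List_InE; rewrite mem_enum.
by exists d => // i x Cix; apply: dC; exists i.
Qed.

Variable K : comNzRingType.
Implicit Types (A B G H : gser K k).

Definition supp_in_cone H := forall a, H a != 0 -> in_cone C a.

Lemma gpow_in_cone G : supp_in_cone G -> forall nu, supp_in_cone (gpow G nu).
Proof.
move=> GC nu; elim: nu => [|nu IH] a /=.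
  rewrite /gone; case: (eqVneq a [ffun=> 0]) => [-> _|_]; last by rewrite eqxx.
  exact: in_cone0.
by case/fsum_neq0 => -[b c] [[/= /GC bC /IH cC <-] _]; apply: in_coneD.
Qed.

Lemma gcomp_in_cone (P : nat -> K) G : supp_in_cone G -> supp_in_cone (gcomp P G).
Proof.
move=> GC a /fsum_neq0 [nu [+ _]]; apply: contraNP => aC.
suff /eqP -> : gpow G nu a == 0 by rewrite mulr0.
by apply: contraT => /(@gpow_in_cone G GC nu a).
Qed.

Variables (M : ordMulRVS) (m : 'I_k.+1 -> M).
Hypothesis m_small : forall i, msmall (m i).

Lemma cone_fibre_finite (n : M) : finiteP (fun a => in_cone C a /\ mono m a = n).
Proof.
apply: contrapT => /not_finiteP_seq [s [sn s_inj]].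
have [j [l [jl sjl]]] := cone_dickson (fun j => (sn j).1).
by apply: (s_inj _ _ jl); apply: (mono_inj_le m_small sjl); rewrite (sn j).2 (sn l).2.
Qed.

Lemma geval_in_hahn H : supp_in_cone H -> in_hahn (geval m H).
Proof.
move=> HC; apply: in_hahn_of_descents => ys ys_supp.
have /choice [a aP] : forall j, exists a, H a != 0 /\ mono m a = ys j.
  by move=> j; have [a [[Ha an] _]] := fsum_neq0 (ys_supp j); exists a.
have [j [l [jl ajl]]] := cone_dickson (fun j => HC _ (aP j).1).
by exists j, l; split => //; rewrite -(aP j).2 -(aP l).2; apply: mono_anti.
Qed.

Lemma cone_fibre_box (n : M) : exists Om : seq (exps k),
  [/\ uniq Om, {in Om, forall x, in_cone C x} &
      forall b c, in_cone C b -> in_cone C c -> mono m (b + c) = n ->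
        [/\ b \in Om, c \in Om & b + c \in Om]].
Proof.
have [Phi Phin] := cone_fibre_finite n.
have [Om [uOm Omx]] := finiteP_uniq (finiteP_bigcup Phi (fun a => cone_below_finite a)).
exists Om; split => // [x /Omx [a _ []] //|b c bC cC bcn].
have bcC := in_coneD bC cC; have bcPhi := Phin _ (conj bcC bcn).
split; apply/Omx; exists (b + c) => //; split => // i; rewrite ffunE.
- by rewrite lerDl (in_cone_ge0 cC).
- by rewrite lerDr (in_cone_ge0 bC).
Qed.

Section FibreBox.
Variables (n : M) (Om : seq (exps k)).
Hypotheses (uOm : uniq Om) (OmC : {in Om, forall x, in_cone C x}).
Hypothesis Om_split : forall b c, in_cone C b -> in_cone C c -> mono m (b + c) = n ->
  [/\ b \in Om, c \in Om & b + c \in Om].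

Lemma geval_fibre_box H b c : supp_in_cone H -> b \in Om -> c \in Om ->
  mmul (mono m b) (mono m c) = n ->
  geval m H (mono m c) = \sum_(c' <- Om | mono m c' == mono m c) H c'.
Proof.
move=> HC bOm cOm bcn; rewrite (geval_big_seq uOm) // => c' /HC c'C c'c.
by case: (Om_split (OmC bOm) c'C); rewrite // monoD c'c.
Qed.

Lemma geval_gmul_box A B : supp_in_cone A -> supp_in_cone B ->
  geval m (gmul A B) n =
  \sum_(b <- Om) A b * \sum_(c <- Om | mmul (mono m b) (mono m c) == n) B c.
Proof.
move=> AC BC; rewrite (geval_big_seq uOm); last first.
  move=> _ /fsum_neq0 [[b c] [[/= /AC bC /BC cC <-] _]] bcn.
  by case: (Om_split bC cC bcn).
transitivity (\sum_(a <- Om | mono m a == n)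
                \sum_(b <- Om) \sum_(c <- Om | b + c == a) A b * B c).
  apply: eq_bigr => a /eqP an; apply: gmul_big_seq => // b c /AC bC /BC cC bca.
  by case: (Om_split bC cC); rewrite ?bca.
rewrite exchange_big; apply: eq_big_seq => b bOm /=.
rewrite (sum_fibres (g := fun c => b + c)) // => [|c cOm /eqP].
  by rewrite mulr_sumr; apply: eq_bigl => c; rewrite monoD.
by case/(Om_split (OmC bOm) (OmC cOm)).
Qed.

End FibreBox.

(* Grouping the double sum of [geval_gmul_box] by the value of [mono m b]: a
   nonzero group yields a factorisation [n = n1 * n2]. *)
Lemma geval_gmul_neq0 A B (n : M) : supp_in_cone A -> supp_in_cone B ->
  geval m (gmul A B) n != 0 ->
  exists n1 n2, [/\ geval m A n1 != 0, geval m B n2 != 0 & n = mmul n1 n2].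
Proof.
move=> AC BC; apply: contraNP => no_split; apply/eqP.
have [Om [uOm OmC Om_split]] := cone_fibre_box n.
rewrite (geval_gmul_box uOm OmC Om_split AC BC).
apply: (sum_mul_fibres_eq0 (g := mono m)
  (h := fun v => \sum_(c <- Om | mmul v (mono m c) == n) B c)).
move=> x xOm hx; have [c [/List_InE cOm /eqP xcn _]] := sum_neq0 hx.
have Bx : \sum_(c' <- Om | mmul (mono m x) (mono m c') == n) B c' = geval m B (mono m c).
  rewrite (geval_fibre_box uOm OmC Om_split BC xOm cOm xcn); apply: eq_bigl => c'.
  by apply/eqP/eqP => [xc'n|->//]; apply: (@mmul_cancel _ (mono m x)); rewrite xc'n.
rewrite -(geval_fibre_box uOm OmC Om_split AC cOm xOm) 1?mmulC //.
apply/eqP; apply: contraT => Ax; case: no_split.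
by exists (mono m x), (mono m c); split; rewrite -?Bx.
Qed.

Lemma geval_gpow_supp_prod G nu (n : M) : supp_in_cone G ->
  geval m (gpow G nu) n != 0 -> supp_prod (geval m G) nu n.
Proof.
move=> GC; elim: nu n => [|nu IH] n /=.
  case/fsum_neq0 => a [[+ <-] _]; rewrite /gone.
  by case: (eqVneq a [ffun=> 0]) => [-> _|]; rewrite ?mono0 ?eqxx.
case/(geval_gmul_neq0 GC (@gpow_in_cone G GC nu)) => n1 [n2 [Gn1 /IH Gn2 ->]].
by exists n1, n2.
Qed.

End Cone.

Section Degree.
Variables (K : comNzRingType) (k : nat) (C : exp_cone k) (G : gser K k).
Hypotheses (GC : supp_in_cone C G) (G0 : G 0 = 0).

(* As G has no constant term, each of the nu factors raises the total degree
   by at least [d]. *)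
Lemma gpow_degree_ge d : (forall i x, C i x -> 0 < x -> d <= x) ->
  forall nu a, gpow G nu a != 0 -> nu%:R * d <= \sum_i a i.
Proof.
move=> dC; elim=> [|nu IH] a.
  by move/(gpow_in_cone GC) => aC; rewrite mul0r sumr_ge0 // => i _; apply: in_cone_ge0.
case/fsum_neq0 => -[b c] [[/= Gb /IH cd <-] _].
have [j bj] : exists j, b j != 0.
  apply: contrapT => /forallNP b0; move: Gb; suff -> : b = 0 by rewrite G0 eqxx.
  by apply/ffunP => i; rewrite ffunE; apply/eqP; apply: contrapT => /negP; apply: b0.
have bC := GC Gb; have bj0 : 0 < b j by rewrite lt_def bj (in_cone_ge0 bC).
rewrite (eq_bigr (fun i => b i + c i)) => [|i _]; last by rewrite ffunE.
rewrite big_split /= -nat1r mulrDl mul1r lerD //.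
apply: le_trans (dC _ _ (bC j) bj0) _.
by rewrite (bigD1 j) //= lerDl sumr_ge0 // => i _; apply: in_cone_ge0.
Qed.

Lemma gpow_eq0_large :
  exists N : exps k -> nat, forall a nu, (N a <= nu)%N -> gpow G nu a = 0.
Proof.
have [d d0 dC] := @cone_pos_lbound _ C.
exists (fun a => Num.Def.archi_bound ((\sum_i `|a i|) / d)) => a nu Nnu.
apply/eqP; apply: contraT => /(gpow_degree_ge dC) nud.
have : (nu%:R : Real) < (Num.Def.archi_bound ((\sum_i `|a i|) / d))%:R.
  apply: le_lt_trans (Num.Theory.archi_boundP _); last by rewrite divr_ge0 ?sumr_ge0 ?ltW.
  rewrite ler_pdivlMr //; apply: le_trans nud _.
  by apply: ler_sum => i _; apply: ler_norm.
by rewrite ltr_nat ltnNge Nnu.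
Qed.

Variables (M : ordMulRVS) (m : 'I_k.+1 -> M).
Hypothesis m_small : forall i, msmall (m i).

Lemma geval_gcomp_neq0 (P : nat -> K) (n : M) :
  geval m (gcomp P G) n != 0 -> exists nu, geval m (gpow G nu) n != 0.
Proof.
have [N NG] := gpow_eq0_large.
have [Phi [uPhi Phix]] := finiteP_uniq (cone_fibre_finite C m_small n).
have inPhi H : supp_in_cone C H -> forall a, H a != 0 -> mono m a = n -> a \in Phi.
  by move=> HC a /HC aC an; apply/Phix.
pose B := \max_(a <- Phi) N a.
rewrite (geval_big_seq uPhi); last by apply: inPhi; apply: gcomp_in_cone.
rewrite (eq_bigr (fun a => \sum_(nu < B) P nu * gpow G nu a)) => [|a /eqP an]; last first.
  apply: gcomp_big_ord => nu Bnu; have [aPhi|aPhi] := boolP (a \in Phi).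
    by apply: NG; apply: leq_trans Bnu; apply: leq_bigmax_seq.
  apply/eqP; apply: contraT => /(gpow_in_cone GC) aC.
  by case/negP: aPhi; apply/Phix.
rewrite exchange_big /= => /sum_neq0 [nu [_ _ Pnu]]; exists nu; move: Pnu.
rewrite -mulr_sumr -(geval_big_seq (H := gpow G nu) uPhi).
  by apply: contraNneq => ->; rewrite mulr0.
by apply: inPhi; apply: gpow_in_cone.
Qed.

End Degree.

Lemma geval_is_Mgps (K : comNzRingType) (M : ordMulRVS) (k : nat) (C : exp_cone k)
    (m : 'I_k.+1 -> M) (H : gser K k) :
  (forall i, msmall (m i)) -> supp_in_cone C H -> is_Mgps m (geval m H).
Proof.
move=> m_small HC; split=> //; split; first exact: (geval_in_hahn m_small HC).
exists H; split; last split=> //.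
  split=> [a /HC aC|]; first exact: in_cone_ge0.
  exists (cone_set C); split=> [i|a /HC //].
  exact/natural_well_ordered/cone_natural.
move=> r i _; have [L hL] := cone_natural C i r.
exists L => x [/andP [_ xr] [a [/HC aC ai]]]; apply: hL.
by split; rewrite // -ai; apply: aC.
Qed.

Lemma gps_exp_cone (K : comNzRingType) (k : nat) (G : gser K k) :
  is_gps G -> natural_support G -> exists C : exp_cone k, supp_in_cone C G.
Proof.
case=> G_ge0 _ Gnat; pose S i x := exists a, G a != 0 /\ a i = x.
have S_ge0 i x : S i x -> 0 <= x by case=> a [Ga <-]; apply: G_ge0.
have S_nat i : natural (S i).
  move=> r; have [r0|r0] := lerP r 0.
    by exists [::] => x [/S_ge0 x0 xr]; have := lt_le_trans xr r0; rewrite ltNge x0.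
  have [L hL] := Gnat r i r0; exists L => x [Sx xr]; apply: hL.
  by rewrite (S_ge0 _ _ Sx) xr.
exists (ExpCone (fun i => add_closure_ge0 (@S_ge0 i))
  (fun i => add_closure_natural (@S_ge0 i) (S_nat i))
  (fun i => add_closure0 (S i)) (fun i => @add_closureD (S i))).
by move=> a Ga i; apply: add_closure_sub; exists a.
Qed.

Section LeadingMonomial.
Variables (K : comNzRingType) (M : ordMulRVS) (F : M -> K) (l : M).
Hypotheses (Fl : is_lm F l) (l_small : msmall l).

Lemma mpowr_nat_anti N nu : (N <= nu)%N -> mle (mpowr l nu%:R) (mpowr l N%:R).
Proof.
move=> Nnu; rewrite -(subnKC Nnu) natrD mpowrD; apply: mle1_mulr.
by apply: mpowr_le1; [case: l_small | apply: ler0n].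
Qed.

Lemma supp_prod_le_pow nu n : supp_prod F nu n -> mle n (mpowr l nu%:R).
Proof.
elim: nu n => [|nu IH] n /=; first by move=> ->; rewrite mpowr0; apply: mle_refl.
case=> n1 [n2 [Fn1 /IH n2l ->]]; rewrite -nat1r mpowrD mpowr1.
by apply: mle_mul2 => //; apply: Fl.2.
Qed.

Lemma supp_prod_le1 nu n : supp_prod F nu n -> mle n (mone M).
Proof.
move=> /supp_prod_le_pow /mle_trans; apply; rewrite -(mpowr0 l).
exact: mpowr_nat_anti (leq0n nu).
Qed.

Lemma supp_prod_finite c : M_natural F ->
  forall nu, finiteP (fun n => supp_prod F nu n /\ mlt c n).
Proof.
move=> /(_ c) [LF hLF]; elim=> [|nu [L hL]].
  by exists [:: mone M] => n [/= ->]; left.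
exists (List.flat_map (fun x => List.map (mmul x) L) LF).
move=> _ [[n1 [n2 [Fn1 n2prod ->]]] cn]; apply/List.in_flat_map; exists n1; split.
  apply: hLF; split => //; apply: mlt_le_trans cn _; apply: mle1_mulr.
  exact: supp_prod_le1 n2prod.
apply: List.in_map; apply: hL; split => //; apply: mlt_le_trans cn _.
by rewrite mmulC; apply: mle1_mulr; apply: mle_trans (Fl.2 _ Fn1) l_small.1.
Qed.

Lemma M_natural_of_supp_prod (H : M -> K) : M_natural F ->
  coinitial (fun nu : nat => mpowr l nu%:R) ->
  (forall n, H n != 0 -> exists nu, supp_prod F nu n) -> M_natural H.
Proof.
move=> FMnat coin Hprod c; have [N lNc] := coin c.
apply: finiteP_sub (finiteP_bigcup (iota 0 N) (fun nu => supp_prod_finite c FMnat nu)).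
move=> n [/Hprod [nu nun] cn]; exists nu => //; apply/List_InE.
rewrite mem_iota /= add0n ltnNge; apply/negP => Nnu; case: cn => cn; apply.
apply: mle_anti cn (mle_trans (supp_prod_le_pow nun) _).
exact: mle_trans (mpowr_nat_anti Nnu) lNc.
Qed.

End LeadingMonomial.

Lemma lm_small_const0 (K : comNzRingType) (M : ordMulRVS) (k : nat)
    (m : 'I_k.+1 -> M) (G : gser K k) :
  (forall i, msmall (m i)) -> (forall a, G a != 0 -> forall i, 0 <= a i) ->
  lm_small (geval m G) -> G 0 = 0.
Proof.
move=> m_small G_ge0 [l [[_ lmax] [l1 nl1]]]; apply: contra_notP nl1 => /eqP G0.
apply: mle_anti l1 (lmax _ _).
rewrite (@geval_big_seq _ _ _ _ _ _ [:: 0]) // => [|a /[dup] /G_ge0 a0 Ga].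
  by rewrite big_mkcond big_seq1 mono0 eqxx.
by move=> /(mono_eq1 m_small a0) ->; rewrite mem_seq1.
Qed.

Lemma Mcomp_spec (K : comNzRingType) (M : ordMulRVS) (k : nat) (m : 'I_k.+1 -> M)
    (P : nat -> K) (F : M -> K) :
  is_Mgps m F -> exists G : gser K k,
    [/\ is_gps G, natural_support G, F = geval m G & Mcomp m P F = geval m (gcomp P G)].
Proof.
case=> _ [_ exG]; rewrite /Mcomp; case: excluded_middle_informative => [HG|/(_ exG) []].
by case: (constructive_indefinite_description _ HG) => G [? [? ?]]; exists G.
Qed.

Theorem proposition5p9 (K : comNzRingType)
    (charK0 : forall n : nat, (n%:R : K) = 0 -> n = 0%N)
    (M : ordMulRVS) (k : nat) (m : 'I_k.+1 -> M) (F : M -> K)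
    (hF : is_Mgps m F) (hlm : lm_small F) (P : nat -> K) :
  is_Mgps m (Mcomp m P F) /\
  (M_natural F ->
   (forall l, is_lm F l -> coinitial (fun nu : nat => mpowr l (nu%:R))) ->
   M_natural (Mcomp m P F)).
Proof.
have [m_small _] := hF.
have [G [Ggps Gnat FG ->]] := Mcomp_spec P hF.
have [C GC] := gps_exp_cone Ggps Gnat.
split; first exact: geval_is_Mgps m_small (gcomp_in_cone GC).
move=> FMnat coin; have [l [Fl l_small]] := hlm.
have G0 : G 0 = 0 by apply: lm_small_const0 m_small Ggps.1 _; rewrite -FG.
apply: (M_natural_of_supp_prod Fl l_small FMnat (coin l Fl)) => n.
case/(geval_gcomp_neq0 GC G0 m_small) => nu Gnu; exists nu; rewrite FG.
exact: (geval_gpow_supp_prod m_small GC Gnu).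
Qed.
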